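(* Let $G$ be a cubic graph and let $Z$ be a set of $3$ vertices disjoint from $V(G)$. (i) If $G$ is $3$-edge colourable, then $\overline{K_Z}\vee G$ has a $K_3$-decomposition. (ii) If $G$ is not $3$-edge colourable, then the leave of any $K_3$-packing of $\overline{K_Z}\vee G$ contains an edge incident with a vertex in $Z$.
   Context: $\overline{K_Z}$ is the graph with vertex set $Z$ and no edges. For vertex-disjoint graphs $G,H$, $G\vee H$ has vertex set $V(G)\cup V(H)$ and edge set $E(G)\cup E(H)\cup\{xy:x\in V(G),y\in V(H)\}$. A $K_3$-decomposition of a graph is a set of triangles such that each edge lies in exactly one; a $K_3$-packing of $G$ is a $K_3$-decomposition of some subgraph $H$ of $G$, and its leave is the graph $G-H$ (vertex set $V(G)$, edge set $E(G)\setminus E(H)$). Edge colourings are proper. *)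

From mathcomp Require Import all_boot.
Set Implicit Arguments. Unset Strict Implicit. Unset Printing Implicit Defensive.

Definition simple_graph (V : finType) (e : rel V) : Prop :=
  (forall x, ~~ e x x) /\ (forall x y, e x y = e y x).

Definition subgraph (V : finType) (h e : rel V) : Prop :=
  simple_graph h /\ (forall x y, h x y -> e x y).

Definition cubic (V : finType) (e : rel V) : Prop :=
  forall x, #|[set y | e x y]| = 3.

Definition edge_colourable3 (V : finType) (e : rel V) : Prop :=
  exists c : V -> V -> 'I_3,
    (forall x y, e x y -> c x y = c y x) /\
    (forall x y z, e x y -> e x z -> y != z -> c x y != c x z).

Definition triangle (V : finType) (e : rel V) (t : {set V}) : bool :=
  (#|t| == 3) && [forall x in t, forall y in t, (x != y) ==> e x y].

Definition K3_decomposition (V : finType) (e : rel V) (D : {set {set V}}) : Prop :=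
  (forall t, t \in D -> triangle e t) /\
  (forall x y, e x y -> #|[set t in D | (x \in t) && (y \in t)]| = 1).

(* the join  \overline{K_Z} \vee G  with Z = 'I_3 (3 new vertices) *)
Definition join_Z3 (T : finType) (e : rel T) : rel (T + 'I_3) :=
  fun u v => match u, v with
             | inl x, inl y => e x y
             | inl _, inr _ => true
             | inr _, inl _ => true
             | inr _, inr _ => false
             end.

From mathcomp Require Import all_boot.
Set Implicit Arguments. Unset Strict Implicit.

(* (i) An edge xy of colour i yields the triangle {z_i, x, y}.  These triangles
   use every edge of G once, and every edge z_i x once because the three edges
   at x carry the three colours.
   (ii) If a packing covers every edge at Z, the triangle through z_i x is
   {z_i, x, y} for an edge xy of G, as Z is independent; give xy the colour i.
   At a vertex x the triangles through z_0 x, z_1 x, z_2 x pick three distinct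
   neighbours, hence all of them since G is cubic, so every edge gets exactly
   one colour, and the colouring is proper because the triangle through z_i x
   is unique. *)

Lemma cards3 (V : finType) (a b c : V) :
  a != b -> a != c -> b != c -> #|[set a; b; c]| = 3.
Proof.
move=> ab ac bc; rewrite setUC cardsU1 cards2 ab !inE.
by rewrite negb_or (eq_sym c a) ac (eq_sym c b) bc.
Qed.

Lemma in_set3_inr (A B : finType) (b b' : B) (a a' : A) :
  (inr b' \in [set inr b; inl a; inl a']) = (b' == b).
Proof. by rewrite !inE !orbF. Qed.

Lemma in_set3_inl (A B : finType) (b : B) (a a' a'' : A) :
  (inl a'' \in [set inr b; inl a; inl a']) = (a'' == a) || (a'' == a').
Proof. by rewrite !inE. Qed.

Lemma set3C23 (V : finType) (a b c : V) : [set a; b; c] = [set a; c; b].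
Proof. by rewrite -!setUA (setUC [set b]). Qed.

Lemma cards_eq1 (U : finType) (P : pred U) t0 :
  P t0 -> (forall t, P t -> t = t0) -> #|[set t | P t]| = 1.
Proof.
move=> Pt0 P_t0; apply/eqP/cards1P; exists t0; apply/setP => t; rewrite !inE.
by apply/idP/eqP => [/P_t0 | ->].
Qed.

Lemma imset_card_onto (aT rT : finType) (f : aT -> rT) (A : {set aT}) (B : {set rT}) :
  {in A &, injective f} -> {in A, forall x, f x \in B} -> #|B| <= #|A| ->
  f @: A = B.
Proof.
move=> f_inj fAB leBA; apply/eqP; rewrite eqEcard card_in_imset // leBA andbT.
by apply/subsetP => _ /imsetP[x xA ->]; apply: fAB.
Qed.

Lemma irr_rel_neq (V : eqType) (e : rel V) x y :
  (forall x, ~~ e x x) -> e x y -> x != y.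
Proof. by move=> e_irr; apply: contraTneq => ->. Qed.

Section Triangles.

Variables (V : finType) (h : rel V).

Lemma triangle_edge t a b : triangle h t -> a \in t -> b \in t -> a != b -> h a b.
Proof.
case/andP=> _ /forall_inP/(_ a)/[apply]/forall_inP/(_ b)/[apply]/implyP.
exact.
Qed.

Lemma triangle_third t a b : triangle h t -> a \in t -> b \in t -> a != b ->
  exists w, [/\ t = [set a; b; w], h a w & h b w].
Proof.
move=> tri_t at_ bt ab; have /andP[/eqP ct _] := tri_t.
have bta : b \in t :\ a by rewrite !inE eq_sym ab.
have /cards1P[w tw] : #|t :\ a :\ b| == 1.
  by move: ct; rewrite (cardsD1 a) at_ (cardsD1 b) bta !add1n => -[->].
have : w \in t :\ a :\ b by rewrite tw set11.
rewrite !inE => /and3P[wb wa wt]; exists w; split.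
- by rewrite -(setD1K at_) -(setD1K bta) tw setUA.
- by apply: (triangle_edge tri_t at_ wt); rewrite eq_sym.
- by apply: (triangle_edge tri_t bt wt); rewrite eq_sym.
Qed.

Variable D : {set {set V}}.

Lemma K3_decompositionI :
  (forall t, t \in D -> triangle h t) ->
  (forall a b, h a b -> exists2 t, t \in D & (a \in t) && (b \in t)) ->
  (forall a b t1 t2, h a b -> t1 \in D -> t2 \in D ->
     (a \in t1) && (b \in t1) -> (a \in t2) && (b \in t2) -> t1 = t2) ->
  K3_decomposition h D.
Proof.
move=> D_tri cover uniq; split=> // a b hab.
have [t0 t0D abt0] := cover a b hab.
apply: (cards_eq1 (t0 := t0)) => [|t /andP[tD abt]]; first by rewrite t0D.
exact: uniq hab tD t0D abt abt0.
Qed.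

Hypothesis KD : K3_decomposition h D.

Lemma K3_decomposition_cover a b :
  h a b -> exists2 t, t \in D & (a \in t) && (b \in t).
Proof.
case: KD => _ /[apply]/eqP/cards1P[t Dab].
by exists t; have := set11 t; rewrite -Dab inE => /andP[].
Qed.

Lemma K3_decomposition_uniq a b t1 t2 : h a b -> t1 \in D -> t2 \in D ->
  (a \in t1) && (b \in t1) -> (a \in t2) && (b \in t2) -> t1 = t2.
Proof.
case: KD => _ /[apply]/eqP/cards1P[t Dab] t1D t2D abt1 abt2.
have: t1 \in [set t in D | (a \in t) && (b \in t)] by rewrite inE t1D.
have: t2 \in [set t in D | (a \in t) && (b \in t)] by rewrite inE t2D.
by rewrite Dab !inE => /eqP -> /eqP ->.
Qed.

End Triangles.

Section ColouringToDecomposition.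

Variables (T : finType) (e : rel T) (c : T -> T -> 'I_3).
Hypotheses (e_irr : forall x, ~~ e x x) (e_sym : forall x y, e x y = e y x).
Hypothesis e_cubic : cubic e.
Hypothesis c_sym : forall x y, e x y -> c x y = c y x.
Hypothesis c_proper : forall x y y', e x y -> e x y' -> y != y' -> c x y != c x y'.

Definition colour_triangle x y : {set T + 'I_3} := [set inr (c x y); inl x; inl y].

Definition colour_decomposition : {set {set T + 'I_3}} :=
  [set colour_triangle x y | x in T, y in e x].

Lemma colour_triangleC x y : e x y -> colour_triangle x y = colour_triangle y x.
Proof. by move=> exy; rewrite /colour_triangle c_sym // set3C23. Qed.

Lemma colour_triangle_is_triangle x y :
  e x y -> triangle (join_Z3 e) (colour_triangle x y).
Proof.
move=> exy; have xy := irr_rel_neq e_irr exy.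
rewrite /triangle cards3 //=; apply/forall_inP => u; rewrite !inE -orbA.
case/or3P=> /eqP-> ; apply/forall_inP => v; rewrite !inE -orbA;
  by case/or3P=> /eqP->; rewrite //= ?eqxx ?exy ?implybT // e_sym exy implybT.
Qed.

Lemma colour_inj x y y' : e x y -> e x y' -> c x y = c x y' -> y = y'.
Proof. by move=> exy exy'; apply: contra_eq; apply: c_proper. Qed.

Lemma colour_onto x z : exists2 y, e x y & c x y = z.
Proof.
have im_c : c x @: [set y | e x y] = [set: 'I_3].
  apply: imset_card_onto => [y y'|y|]; rewrite ?inE ?cardsT ?card_ord ?e_cubic //.
  exact: colour_inj.
have : z \in c x @: [set y | e x y] by rewrite im_c inE.
by case/imsetP=> y; rewrite inE => exy ->; exists y.
Qed.

Lemma mem_colour_decomposition x y :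
  e x y -> colour_triangle x y \in colour_decomposition.
Proof. by move=> exy; apply/imset2P; exists x y. Qed.

Lemma colour_decompositionP t x : t \in colour_decomposition -> inl x \in t ->
  exists2 y, e x y & t = colour_triangle x y.
Proof.
case/imset2P=> a b _ eab ->; rewrite in_set3_inl.
case/orP=> /eqP->; first by exists b.
by exists a; [rewrite e_sym | apply: colour_triangleC].
Qed.

Lemma colour_decomposition_cover x v : join_Z3 e (inl x) v ->
  exists2 t, t \in colour_decomposition & (inl x \in t) && (v \in t).
Proof.
case: v => [y /= exy | z _].
  exists (colour_triangle x y); first exact: mem_colour_decomposition.
  by rewrite !in_set3_inl !eqxx orbT.
have [y exy <-] := colour_onto x z.
exists (colour_triangle x y); first exact: mem_colour_decomposition.
by rewrite in_set3_inl in_set3_inr !eqxx.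
Qed.

Lemma colour_decomposition_uniq x v t1 t2 : join_Z3 e (inl x) v ->
  t1 \in colour_decomposition -> t2 \in colour_decomposition ->
  (inl x \in t1) && (v \in t1) -> (inl x \in t2) && (v \in t2) -> t1 = t2.
Proof.
move=> exv /colour_decompositionP Pt1 /colour_decompositionP Pt2.
case/andP=> /Pt1[y1 exy1 ->] vt1 /andP[/Pt2[y2 exy2 ->] vt2].
congr colour_triangle.
case: v exv vt1 vt2 => [y /= exy | z _].
  have /negbTE yx : y != x by rewrite eq_sym (irr_rel_neq e_irr).
  by rewrite !in_set3_inl yx => /eqP<- /eqP<-.
by rewrite !in_set3_inr => /eqP-> /eqP; apply: colour_inj.
Qed.

Lemma colour_decomposition_K3 :
  K3_decomposition (join_Z3 e) colour_decomposition.
Proof.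
apply: K3_decompositionI.
- by move=> _ /imset2P[x y _ exy ->]; apply: colour_triangle_is_triangle.
- case=> [x v|z [x _|//]]; first exact: colour_decomposition_cover.
  have [t tD xzt] := @colour_decomposition_cover x (inr z) isT.
  by exists t; rewrite // andbC.
- case=> [x v t1 t2|z [x|//] t1 t2 _]; first exact: colour_decomposition_uniq.
  rewrite ![(inr z \in _) && _]andbC.
  exact: colour_decomposition_uniq.
Qed.

End ColouringToDecomposition.

Section PackingToColouring.

Variables (T : finType) (e : rel T) (h : rel (T + 'I_3)).
Variable D : {set {set T + 'I_3}}.
Hypotheses (e_irr : forall x, ~~ e x x) (e_cubic : cubic e).
Hypotheses (h_sub : subgraph h (join_Z3 e)) (KD : K3_decomposition h D).
Hypothesis h_Z : forall z x, h (inr z) (inl x).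

Definition packed_triangle x y z := [set inr z; inl x; inl y] \in D.

Lemma packed_triangleC x y z : packed_triangle x y z = packed_triangle y x z.
Proof. by rewrite /packed_triangle set3C23. Qed.

Lemma packed_triangle_exists x z : exists y, e x y && packed_triangle x y z.
Proof.
have [t tD /andP[zt xt]] := K3_decomposition_cover KD (h_Z z x).
have [[y|z'] [def_t hzw hxw]] := triangle_third (KD.1 t tD) zt xt isT.
  by exists y; rewrite /packed_triangle -def_t tD andbT; apply: h_sub.2 _ _ hxw.
by have := h_sub.2 _ _ hzw. (* Z is independent in the join *)
Qed.

Lemma packed_triangle_colour_uniq x y z z' : e x y ->
  packed_triangle x y z -> packed_triangle x y z' -> z = z'.
Proof.
move=> exy Dz Dz'; have xy : inl x != inl y :> T + 'I_3.
  by rewrite (inj_eq inl_inj) (irr_rel_neq e_irr exy).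
have hxy : h (inl x) (inl y).
  by apply: (triangle_edge (KD.1 _ Dz)) xy; rewrite in_set3_inl eqxx ?orbT.
have tt' : [set inr z; inl x; inl y] = [set inr z'; inl x; inl y].
  by apply: (K3_decomposition_uniq KD hxy); rewrite // !in_set3_inl !eqxx ?orbT.
by apply/esym/eqP; rewrite -(in_set3_inr z z' x y) tt' in_set3_inr eqxx.
Qed.

Lemma packed_triangle_nbr_uniq x y y' z : e x y' ->
  packed_triangle x y z -> packed_triangle x y' z -> y = y'.
Proof.
move=> exy' Dy Dy'.
have tt' : [set inr z; inl x; inl y] = [set inr z; inl x; inl y'].
  apply: (K3_decomposition_uniq KD (h_Z z x));
    by rewrite // in_set3_inr in_set3_inl !eqxx.
have /negbTE y'x : y' != x by rewrite eq_sym (irr_rel_neq e_irr).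
have := in_set3_inl z x y y'; rewrite tt' in_set3_inl eqxx orbT y'x.
by move/esym/eqP.
Qed.

Lemma packed_triangle_cover x y : e x y -> exists z, packed_triangle x y z.
Proof.
move=> exy; pose f z := xchoose (packed_triangle_exists x z).
have fP z : e x (f z) && packed_triangle x (f z) z.
  exact: xchooseP (packed_triangle_exists x z).
have im_f : f @: [set: 'I_3] = [set y | e x y].
  apply: imset_card_onto => [z z' _ _ fzz'|z _|].
  - have /andP[exf Dz] := fP z; have /andP[_ Dz'] := fP z'.
    by rewrite -fzz' in Dz'; apply: packed_triangle_colour_uniq Dz Dz'.
  - by rewrite inE; case/andP: (fP z).
  by rewrite e_cubic cardsT card_ord.
have : y \in f @: [set: 'I_3] by rewrite im_f inE.
by case/imsetP=> z _ ->; exists z; case/andP: (fP z).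
Qed.

Definition packing_colour x y := odflt ord0 [pick z | packed_triangle x y z].

Lemma packing_colourP x y : e x y -> packed_triangle x y (packing_colour x y).
Proof.
move=> exy; rewrite /packing_colour; case: pickP => //= no_z.
by have [z Dz] := packed_triangle_cover exy; move: (no_z z); rewrite Dz.
Qed.

Lemma packing_colourable : edge_colourable3 e.
Proof.
exists packing_colour; split=> [x y _|x y y' exy exy' yy'].
  by congr odflt; apply: eq_pick => z; apply: packed_triangleC.
apply: contra_neq yy' => cxy; apply: (packed_triangle_nbr_uniq exy').
  exact: packing_colourP exy.
by rewrite cxy; apply: packing_colourP.
Qed.

End PackingToColouring.

Theorem lemma5 (T : finType) (e : rel T) :
  simple_graph e -> cubic e ->
  (edge_colourable3 e -> exists D, K3_decomposition (join_Z3 e) D) /\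
  (~ edge_colourable3 e ->
     forall (h : rel (T + 'I_3)) (D : {set {set (T + 'I_3)}}),
       subgraph h (join_Z3 e) -> K3_decomposition h D ->
       exists (z : 'I_3) (v : T + 'I_3),
         join_Z3 e (inr z) v && ~~ h (inr z) v).
Proof.
move=> [e_irr e_sym] e_cubic; split.
  case=> c [c_sym c_proper]; exists (colour_decomposition e c).
  exact: colour_decomposition_K3.
move=> not_colourable h D h_sub KD.
have [/existsP[z /existsP[v leave_zv]] | no_leave] :=
  boolP [exists z, exists v, join_Z3 e (inr z) v && ~~ h (inr z) v].
  by exists z, v.
case: not_colourable; apply: (packing_colourable e_irr e_cubic h_sub KD) => z x.
apply/negPn/negP => not_hzx; move/negP: no_leave; apply.
by apply/existsP; exists z; apply/existsP; exists (inl x); rewrite not_hzx.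
Qed.
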